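(* Let $G=(V,E)$ be any graph on $n\geq 1$ vertices. Then $F(G)\geq \lfloor (n-1)/2\rfloor$.
   Context: All graphs are finite and simple. Given a graph $G=(V,E)$ and a set $S\subseteq V$ of filled vertices, the color change rule is: if a filled vertex $v$ has exactly one unfilled neighbor $w$, then $w$ becomes filled. The derived set of $S$ is the set of filled vertices obtained after applying the rule until no further application is possible. $S$ is a zero forcing set if its derived set is $V$; otherwise $S$ is a failed zero forcing set. The failed zero forcing number $F(G)$ is the maximum size of a failed zero forcing set of $G$. *)

From mathcomp Require Import all_boot.
Set Implicit Arguments. Unset Strict Implicit. Unset Printing Implicit Defensive.

Definition simple_graph (T : finType) (e : rel T) : Prop :=
  symmetric e /\ irreflexive e.

(* Vertices that become filled by one (simultaneous) round of the color change rule: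
   w gets filled if some filled v adjacent to w has w as its only unfilled neighbor. *)
Definition force_step (T : finType) (e : rel T) (S : {set T}) : {set T} :=
  S :|: [set w | [exists v, [&& v \in S, e v w, w \notin S &
                    [forall u, (e v u && (u \notin S)) ==> (u == w)]]]].

(* Derived set: apply the rule until nothing changes (#|T| rounds always suffice,
   since the set grows strictly until it stabilizes). *)
Definition derived_set (T : finType) (e : rel T) (S : {set T}) : {set T} :=
  iter #|T| (force_step e) S.

Definition zero_forcing (T : finType) (e : rel T) (S : {set T}) : bool :=
  derived_set e S == [set: T].

Definition failed_zero_forcing (T : finType) (e : rel T) (S : {set T}) : bool :=
  ~~ zero_forcing e S.

Definition F_num (T : finType) (e : rel T) : nat :=
  \max_(S : {set T} | failed_zero_forcing e S) #|S|.

From mathcomp Require Import all_boot zify.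
Set Implicit Arguments. Unset Strict Implicit. Unset Printing Implicit Defensive.

(* A fort of a vertex set X is a nonempty F inside X such that no vertex of
   X outside F has exactly one neighbour in F.  No vertex of the complement of
   a fort of V can force, so that complement is a failed zero forcing set, and
   it suffices to find a fort with at most n/2 + 1 vertices.  An isolated vertex is a fort on its own.  For a leaf
   l with neighbour w, delete l and w and lift a fort of the rest, adding l if
   needed.  For a vertex v of degree 2 with neighbours x, y, delete v and
   contract y into x; a fort of the smaller graph lifts by adding y or v.  If
   every degree is at least 3, a locally maximal cut gives each vertex at least
   two neighbours on the other side, so both sides are forts and the smaller
   one has at most n/2 vertices. *)

Definition nbrs (T : finType) (e : rel T) (F : {set T}) (z : T) : {set T} :=
  [set u in F | e z u].

Definition fort (T : finType) (e : rel T) (X F : {set T}) : Prop :=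
  [/\ F \subset X, F != set0 & {in X :\: F, forall z, #|nbrs e F z| != 1}].

(* Identifies y with x: x inherits the neighbours of y.  The vertex y itself is
   not removed from the relation, only from the vertex set the fort lives in. *)
Definition contract (T : finType) (e : rel T) (x y : T) : rel T :=
  fun a b => (a != b) && [|| e a b, (a == x) && e y b | (b == x) && e a y].

Lemma fort_nbrs (T : finType) (e : rel T) (X F : {set T}) (z : T) :
  fort e X F -> z \in X -> z \notin F -> #|nbrs e F z| != 1.
Proof. by case=> _ _ cF zX zF; apply: cF; rewrite inE zF. Qed.

Lemma fort_setD2 (T : finType) (e : rel T) (X F : {set T}) (a b : T) :
  fort e (X :\ a :\ b) F -> [/\ F \subset X, a \notin F & b \notin F].
Proof.
case=> /subsetP sF _ _; split.
- by apply/subsetP=> u /sF; rewrite !inE => /and3P [].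
- by apply/negP=> /sF; rewrite !inE eqxx andbF.
- by apply/negP=> /sF; rewrite !inE eqxx.
Qed.

Section Forts.

Variables (T : finType) (e : rel T).
Hypotheses (e_sym : symmetric e) (e_irr : irreflexive e).

Lemma nbrsU1 (a z : T) (F : {set T}) :
  nbrs e (a |: F) z = if e z a then a |: nbrs e F z else nbrs e F z.
Proof.
apply/setP=> u; case: ifP => eza; rewrite !inE;
  by case: (eqVneq u a) => [->|]; rewrite /= ?eza ?andbF ?andbT ?orbT.
Qed.

Lemma card_nbrsU1 (a z : T) (F : {set T}) :
  #|nbrs e (a |: F) z| = #|nbrs e F z| + ((a \notin F) && e z a).
Proof.
rewrite nbrsU1; case: ifP => eza; rewrite ?andbT ?andbF ?addn0 // cardsU1 inE.
by rewrite eza andbT addnC.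
Qed.

Lemma mem_nbrs (X : {set T}) (v u : T) : u \in nbrs e X v -> (u \in X) && (v != u).
Proof. by rewrite inE => /andP [-> evu]; apply: contraTneq evu => ->; rewrite e_irr. Qed.

Lemma fort_setT (X : {set T}) : X != set0 -> fort e X X.
Proof. by move=> nX; split=> // z; rewrite setDv inE. Qed.

Lemma fort_set1 (X : {set T}) (v : T) :
  v \in X -> nbrs e X v = set0 -> fort e X [set v].
Proof.
move=> vX Nv; split; rewrite ?sub1set -?card_gt0 ?cards1 //.
move=> z /setDP [zX _]; suff ->: nbrs e [set v] z = set0 by rewrite cards0.
apply/setP=> u; rewrite !inE; case: eqP => //= ->; rewrite e_sym.
by move/setP: Nv => /(_ z); rewrite !inE zX.
Qed.

Lemma fort_lift_leaf (X F : {set T}) (l w : T) :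
  l \in X -> nbrs e X l = [set w] -> fort e (X :\ l :\ w) F ->
  exists F', fort e X F' /\ #|F'| <= #|F| + 1.
Proof.
move=> lX Nl fF; have [sFX lF wF] := fort_setD2 fF.
have Nl_z z : z \in X -> e l z = (z == w).
  by move=> zX; move/setP: Nl => /(_ z); rewrite !inE zX.
have Nl_F u : u \in F -> e l u = false.
  move=> uF; rewrite Nl_z ?(subsetP sFX) //.
  by apply/negbTE; apply: contraNneq wF => <-.
have fortD z : z \in X -> z \notin F -> z != l -> z != w -> #|nbrs e F z| != 1.
  by move=> zX zF zl zw; apply: (fort_nbrs fF); rewrite // !inE zl zw.
have [w0|w_pos] := posnP #|nbrs e F w|.
  exists F; split; last exact: leq_addr.
  split; [done | by case: fF | move=> z /setDP [zX zF]].
  case: (eqVneq z l) => [->|zl].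
    suff ->: nbrs e F l = set0 by rewrite cards0.
    by apply/setP=> u; rewrite !inE; apply/negbTE/andP=> -[/Nl_F ->].
  by case: (eqVneq z w) => [->|zw]; rewrite ?w0 ?fortD.
exists (l |: F); split; last by rewrite cardsU1 lF addnC.
split; [by rewrite subUset sub1set lX | by rewrite -card_gt0 cardsU1 lF |].
move=> z; rewrite !inE negb_or => /andP [/andP [zl zF] zX].
rewrite card_nbrsU1 lF e_sym Nl_z //=.
case: (eqVneq z w) => [->|zw] /=; last by rewrite addn0 fortD.
by rewrite addn1 eqSS -lt0n.
Qed.

Lemma contract_sym (x y : T) : symmetric (contract e x y).
Proof.
move=> a b; rewrite /contract eq_sym (e_sym b a) (e_sym y a) (e_sym b y).
by case: (a == x); case: (b == x); case: (e a b); case: (e a y); case: (e y b).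
Qed.

Lemma contract_irr (x y : T) : irreflexive (contract e x y).
Proof. by move=> a; rewrite /contract eqxx. Qed.

Lemma nbrs_contract (x y z : T) (F : {set T}) : z \notin F -> z != x ->
  nbrs (contract e x y) F z = nbrs e F z :|: [set u in F | (u == x) && e z y].
Proof.
move=> zF zx; apply/setP=> u; rewrite !inE /contract (negbTE zx) /=.
case uF: (u \in F) => //=; have -> //: z != u by apply: contraNneq zF => ->.
Qed.

Lemma nbrs_contract_x (x y : T) (F : {set T}) : x \notin F ->
  nbrs (contract e x y) F x = nbrs e F x :|: nbrs e F y.
Proof.
move=> xF; apply/setP=> u; rewrite !inE /contract eqxx /=.
case uF: (u \in F) => //=; have ux: u != x by apply: contraNneq xF => <-.
by rewrite eq_sym ux (negbTE ux) /= orbF.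
Qed.

Lemma card_setU_neq1 (A B : {set T}) :
  #|A :|: B| != 1 -> (#|A| == 1) || (#|B| == 1) -> 0 < #|A| /\ 0 < #|B|.
Proof.
have [->|] := eqVneq A set0; first by rewrite set0U cards0 => /negbTE ->.
have [->|] := eqVneq B set0; first by rewrite setU0 cards0 => _ /negbTE ->.
by rewrite -!card_gt0.
Qed.

Section ContractionLift.

Variables (X F : {set T}) (v x y : T).
Hypotheses (vX : v \in X) (Nv : nbrs e X v = [set x; y]) (xy : x != y).
Hypothesis fF : fort (contract e x y) (X :\ v :\ y) F.

Let Nv_z z : z \in X -> e v z = (z == x) || (z == y).
Proof. by move=> zX; move/setP: Nv => /(_ z); rewrite !inE zX. Qed.

Let xX : x \in X. Proof. by move/setP: Nv => /(_ x); rewrite !inE eqxx => /andP []. Qed.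

Let fortD z : z \in X -> z \notin F -> z != v -> z != y ->
  #|nbrs (contract e x y) F z| != 1.
Proof. by move=> zX zF zv zy; apply: (fort_nbrs fF); rewrite // !inE zv zy. Qed.

Lemma nbrs_contracted_vertex : nbrs e F v = if x \in F then [set x] else set0.
Proof.
have [sFX _ yF] := fort_setD2 fF.
apply/setP=> u; rewrite !inE; case uF: (u \in F) => /=.
  rewrite Nv_z ?(subsetP sFX) //; have -> /=: (u == y) = false.
    by apply: contraNF yF => /eqP <-.
  rewrite orbF; case xF: (x \in F); rewrite ?inE //.
  by apply: contraFF xF => /eqP <-.
case xF: (x \in F); rewrite ?inE //.
by apply/esym; apply: contraFF uF => /eqP ->.
Qed.

Lemma fort_contract_in : x \in F -> fort e X (y |: F).
Proof.
move=> xF; have [sFX _ yF] := fort_setD2 fF.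
have yX : y \in X by move/setP: Nv => /(_ y); rewrite !inE eqxx orbT => /andP [].
split; [by rewrite subUset sub1set yX | by rewrite -card_gt0 cardsU1 yF |].
move=> z; rewrite !inE negb_or => /andP [/andP [zy zF] zX].
case: (eqVneq z v) => [->|zv].
  by rewrite nbrsU1 nbrs_contracted_vertex xF Nv_z // eqxx orbT cards2 (eq_sym y) xy.
have zx : z != x by apply: contraNneq zF => ->.
have := fortD zX zF zv zy; rewrite nbrs_contract // card_nbrsU1 yF /=.
case: (e z y) => /=; last first.
  suff ->: [set u in F | (u == x) && false] = set0 by rewrite setU0 addn0.
  by apply/setP=> u; rewrite !inE !andbF.
have ->: [set u in F | (u == x) && true] = [set x].
  by apply/setP=> u; rewrite !inE andbT; case: eqVneq => [->|]; rewrite ?xF ?andbF.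
rewrite addn1 eqSS; apply: contra; rewrite cards_eq0 => /eqP ->.
by rewrite set0U cards1.
Qed.

Let fortD_out z : x \notin F -> z \in X -> z \notin F -> z != v -> z != y -> z != x ->
  #|nbrs e F z| != 1.
Proof.
move=> xF zX zF zv zy zx; have := fortD zX zF zv zy; rewrite nbrs_contract //.
suff ->: [set u in F | (u == x) && e z y] = set0 by rewrite setU0.
by apply/setP=> u; rewrite !inE; case: eqVneq => [->|]; rewrite ?(negbTE xF) ?andbF.
Qed.

Lemma fort_contract_out_stay :
  x \notin F -> #|nbrs e F x| != 1 -> #|nbrs e F y| != 1 -> fort e X F.
Proof.
move=> xF Nx Ny; have [sFX _ _] := fort_setD2 fF.
split; [done | by case: fF | move=> z /setDP [zX zF]].
case: (eqVneq z v) => [->|zv].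
  by rewrite nbrs_contracted_vertex (negbTE xF) cards0.
case: (eqVneq z y) => [->|zy] //; case: (eqVneq z x) => [->|zx] //.
exact: fortD_out.
Qed.

Lemma fort_contract_out_add : x \notin F ->
  (#|nbrs e F x| == 1) || (#|nbrs e F y| == 1) -> fort e X (v |: F).
Proof.
move=> xF N1; have [sFX vF _] := fort_setD2 fF.
have evx : e v x by rewrite Nv_z // eqxx.
have xv : x != v by apply: contraTneq evx => ->; rewrite e_irr.
have [Nx Ny] : 0 < #|nbrs e F x| /\ 0 < #|nbrs e F y|.
  apply: card_setU_neq1 N1; rewrite -nbrs_contract_x //.
  by apply: fortD.
split; [by rewrite subUset sub1set vX | by rewrite -card_gt0 cardsU1 vF |].
move=> z; rewrite !inE negb_or => /andP [/andP [zv zF] zX].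
rewrite card_nbrsU1 vF e_sym Nv_z //=.
case: (eqVneq z x) => [->|zx] /=; first by rewrite addn1 eqSS -lt0n.
case: (eqVneq z y) => [->|zy] /=; first by rewrite addn1 eqSS -lt0n.
by rewrite addn0 fortD_out.
Qed.

Lemma fort_lift_contract : exists F', fort e X F' /\ #|F'| <= #|F| + 1.
Proof.
have [_ vF yF] := fort_setD2 fF.
have [xF|xF] := boolP (x \in F).
  by exists (y |: F); split; [apply: fort_contract_in | rewrite cardsU1 yF addnC].
have [/andP [Nx Ny]|] := boolP ((#|nbrs e F x| != 1) && (#|nbrs e F y| != 1)).
  by exists F; split; [apply: fort_contract_out_stay | apply: leq_addr].
rewrite negb_and !negbK => N1.
by exists (v |: F); split; [apply: fort_contract_out_add | rewrite cardsU1 vF addnC].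
Qed.

End ContractionLift.

Definition cross_deg (X A : {set T}) (a : T) : nat :=
  #|[set u in X | e a u && ((a \in A) != (u \in A))]|.

Definition same_deg (X A : {set T}) (a : T) : nat :=
  #|[set u in X | e a u && ((a \in A) == (u \in A))]|.

Definition cut_size (X A : {set T}) : nat :=
  \sum_(a in X) cross_deg X A a.

Definition flip (A : {set T}) (v : T) : {set T} :=
  [set u | (u \in A) != (u == v)].

Section LocalMaxCut.

Variables (X A : {set T}) (v : T).
Hypothesis vX : v \in X.

Lemma cross_deg_flip_self : cross_deg X (flip A v) v = same_deg X A v.
Proof.
apply: eq_card => u; rewrite !inE eqxx.
case: (eqVneq u v) => [->|uv]; first by rewrite e_irr.
by case: (v \in A); case: (u \in A).
Qed.

Lemma cross_deg_flip a : a != v ->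
  cross_deg X (flip A v) a + (e a v && ((v \in A) != (a \in A))) =
  cross_deg X A a + (e a v && ((v \in A) == (a \in A))).
Proof.
move=> av; rewrite /cross_deg (cardsD1 v) (cardsD1 v [set u in X | _]).
have ->: [set u in X | e a u && ((a \in flip A v) != (u \in flip A v))] :\ v =
         [set u in X | e a u && ((a \in A) != (u \in A))] :\ v.
  apply/setP=> u; rewrite !inE (negbTE av).
  by case: (eqVneq u v) => //= _; case: (a \in A); case: (u \in A).
rewrite !inE vX (negbTE av) eqxx /=.
by case: (e a v); case: (a \in A); case: (v \in A); rewrite /= ?addn0 ?addn1 ?add1n.
Qed.

Lemma sum_adjacent_card (b : pred T) :
  \sum_(a in X :\ v) (e a v && b a : nat) = #|[set u in X | e v u && b u]|.
Proof.
rewrite -sum1_card [LHS]big_mkcond [RHS]big_mkcond /=.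
apply: eq_bigr => a _; rewrite !inE e_sym.
case: (eqVneq a v) => [->|_]; first by rewrite e_irr !andbF.
by case: (a \in X); case: (e v a); case: (b a).
Qed.

Lemma cut_size_flip :
  cut_size X (flip A v) + 2 * cross_deg X A v = cut_size X A + 2 * same_deg X A v.
Proof.
have sums : \sum_(a in X :\ v) cross_deg X (flip A v) a + cross_deg X A v =
            \sum_(a in X :\ v) cross_deg X A a + same_deg X A v.
  have -> : cross_deg X A v =
            \sum_(a in X :\ v) (e a v && ((v \in A) != (a \in A)) : nat).
    by rewrite sum_adjacent_card.
  have -> : same_deg X A v =
            \sum_(a in X :\ v) (e a v && ((v \in A) == (a \in A)) : nat).
    by rewrite sum_adjacent_card.
  rewrite -!big_split /=.
  by apply: eq_bigr => a; rewrite !inE => /andP [av _]; apply: cross_deg_flip.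
rewrite /cut_size !(big_setD1 v vX) /= cross_deg_flip_self.
move: sums; set s' := \sum_(a in X :\ v) _; set s := \sum_(a in X :\ v) _; lia.
Qed.

End LocalMaxCut.

Lemma exists_local_max_cut (X : {set T}) :
  exists A, {in X, forall v, same_deg X A v <= cross_deg X A v}.
Proof.
have [A _ Amax] := @arg_maxnP _ set0 predT (cut_size X) isT.
exists A => v vX; have := Amax (flip A v) isT; have := cut_size_flip A vX; lia.
Qed.

Lemma card_nbrs_split (X A : {set T}) (v : T) :
  #|nbrs e X v| = same_deg X A v + cross_deg X A v.
Proof.
rewrite -(cardsID [set u | (v \in A) == (u \in A)] (nbrs e X v)).
by congr (_ + _); apply: eq_card => u; rewrite !inE;
  case: (u \in X); case: (e v u); case: (v \in A); case: (u \in A).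
Qed.

Lemma fort_of_min_deg3 (X : {set T}) : X != set0 ->
  {in X, forall v, 3 <= #|nbrs e X v|} -> exists F, fort e X F /\ 2 * #|F| <= #|X|.
Proof.
move=> nX deg3; have [A Amax] := exists_local_max_cut X.
have cross2 : {in X, forall v, 2 <= cross_deg X A v}.
  move=> v vX; have := deg3 v vX; have := Amax v vX.
  by rewrite (@card_nbrs_split X A v); lia.
pose side b := [set u in X | (u \in A) == b].
have nbrs_side b z : z \in X :\: side b -> #|nbrs e (side b) z| = cross_deg X A z.
  rewrite !inE => /andP [zb zX]; apply: eq_card => u; rewrite !inE.
  by move: zb; rewrite zX; case: (u \in X); case: (e z u);
    case: (z \in A); case: (u \in A); case: b.
have side_nonempty b : side b != set0.
  have /set0Pn [v vX] := nX; have /card_gt0P [u] := ltnW (cross2 v vX).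
  rewrite !inE => /andP [uX /andP [_ vu]]; apply/set0Pn.
  by case: (boolP ((v \in A) == b)) => vb; [exists v | exists u];
    rewrite !inE ?vX ?uX //; move: vu vb; case: (v \in A); case: (u \in A); case: b.
have fort_side b : fort e X (side b).
  split; [by apply/subsetP=> u; rewrite inE => /andP [] | exact: side_nonempty |].
  move=> z zS; rewrite nbrs_side //.
  by have := cross2 z (subsetP (subsetDl _ _) z zS); case: cross_deg => [|[|]].
have sides : #|side true| + #|side false| = #|X|.
  rewrite -(cardsID A X); congr (_ + _); apply: eq_card => u; rewrite !inE;
    by case: (u \in A); rewrite ?andbT ?andbF.
by case: (leqP #|side true| #|side false|) => h;
  [exists (side true) | exists (side false)]; split => //; lia.
Qed.

End Forts.

Lemma cardsD2 (T : finType) (X : {set T}) (a b : T) :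
  a \in X -> b \in X -> a != b -> #|X :\ a :\ b| = #|X| - 2.
Proof.
move=> aX bX ab; rewrite (cardsD1 a X) (cardsD1 b (X :\ a)) !inE aX bX eq_sym ab.
by rewrite !add1n !subSS subn0.
Qed.

Lemma exists_small_fort (T : finType) (n : nat) (e : rel T) (X : {set T}) :
  symmetric e -> irreflexive e -> #|X| = n -> 0 < n ->
  exists F, fort e X F /\ #|F| <= n./2 + 1.
Proof.
elim/ltn_ind: n e X => n IH e X e_sym e_irr cardX n_gt0.
have nX : X != set0 by rewrite -card_gt0 cardX.
have [n_le2|n_gt2] := leqP n 2.
  exists X; split; first exact: fort_setT.
  by rewrite cardX; case: n n_gt0 n_le2 {IH cardX} => [|[|[|]]].
have IH2 e' a b : symmetric e' -> irreflexive e' -> a \in X -> b \in X -> a != b ->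
    exists F, fort e' (X :\ a :\ b) F /\ #|F| + 1 <= n./2 + 1.
  move=> e'_sym e'_irr aX bX ab.
  have cardD : #|X :\ a :\ b| = n - 2 by rewrite cardsD2 // cardX.
  have [F [fF cF]] := IH (n - 2) ltac:(lia) e' _ e'_sym e'_irr cardD ltac:(lia).
  by exists F; split => //; move: cF; rewrite -!divn2; lia.
have [/forallP deg3 | /forallPn [v]] := boolP [forall v in X, 2 < #|nbrs e X v|].
  have [|F [fF cF]] := fort_of_min_deg3 e_sym e_irr nX.
    by move=> v /(implyP (deg3 v)).
  by exists F; split => //; move: cF; rewrite cardX -divn2; lia.
rewrite negb_imply -leqNgt => /andP [vX].
case dv: #|nbrs e X v| => [|[|[|//]]] _.
- exists [set v]; split; last by rewrite cards1 addn1.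
  by apply: fort_set1 => //; apply/eqP; rewrite -cards_eq0 dv.
- have /eqP/cards1P [w Nv] := dv.
  have /(mem_nbrs e_irr)/andP [wX vw] : w \in nbrs e X v by rewrite Nv set11.
  have [F [fF cF]] := IH2 e v w e_sym e_irr vX wX vw.
  have [F' [fF' cF']] := fort_lift_leaf e_sym vX Nv fF.
  by exists F'; split => //; apply: leq_trans cF' cF.
- have /eqP/cards2P [x [y [xy Nv]]] := dv.
  have /(mem_nbrs e_irr)/andP [yX vy] : y \in nbrs e X v by rewrite Nv !inE eqxx orbT.
  have [F [fF cF]] := IH2 _ v y (contract_sym e_sym x y) (contract_irr e x y) vX yX vy.
  have [F' [fF' cF']] := fort_lift_contract e_sym e_irr vX Nv xy fF.
  by exists F'; split => //; apply: leq_trans cF' cF.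
Qed.

Lemma force_step_stalled (T : finType) (e : rel T) (S : {set T}) :
  {in S, forall v, #|nbrs e (~: S) v| != 1} -> force_step e S = S.
Proof.
move=> stall; apply/setUidPl/subsetP => w.
rewrite inE => /existsP [v /and4P [vS evw wS /forallP only_w]].
suff Nv: nbrs e (~: S) v = [set w] by have := stall v vS; rewrite Nv cards1.
apply/setP=> u; rewrite !inE; apply/andP/eqP => [[uS evu] | ->] //.
by apply/eqP; have := only_w u; rewrite evu uS.
Qed.

Lemma derived_set_fixed (T : finType) (e : rel T) (S : {set T}) :
  force_step e S = S -> derived_set e S = S.
Proof. by rewrite /derived_set => fixS; elim: #|T| => //= k ->. Qed.

Lemma failed_setC_fort (T : finType) (e : rel T) (F : {set T}) :
  fort e [set: T] F -> failed_zero_forcing e (~: F).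
Proof.
move=> fF; have [_ nF _] := fF.
rewrite /failed_zero_forcing /zero_forcing derived_set_fixed.
  by apply: contra nF => /eqP CF; rewrite -[F]setCK CF setCT.
apply: force_step_stalled => v; rewrite inE => vF.
by rewrite setCK; apply: (fort_nbrs fF).
Qed.

Theorem theorem5 (T : finType) (e : rel T) :
  simple_graph e -> 1 <= #|T| -> (#|T|.-1)./2 <= F_num e.
Proof.
move=> [e_sym e_irr] T_gt0.
have [F [fF cardF]] := exists_small_fort e_sym e_irr (cardsT T) T_gt0.
apply: leq_trans (leq_bigmax_cond _ (failed_setC_fort fF)).
have := cardsC F; move: cardF; rewrite -!divn2; lia.
Qed.
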